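(* Let $\varphi$ be a closed block-labelled formula in disjunctive form, and let $f$ be a bijective renaming of propositional variables such that $f(X^k) = [\varphi[X^k]]^k$ for every $X^k \in \mathrm{bv}(\varphi)$. Then for every sub-formula $\psi$ of $\varphi$ and every set $E$ of states of $\mathrm{enc}(\varphi)$ such that $\{\varphi[Y^k] \mid Y^k \in \mathrm{fv}(\psi)\} \subseteq E$ and $E \cap \{\varphi[Y^k] \mid Y^k \in \mathrm{bv}(\psi)\} = \emptyset$, we have $\mathrm{dec}_s(\mathrm{enc}(\varphi), \psi, E) =_f \psi$.
   Context: An LTS is a tuple $(\Sigma, A, \to, s_0)$ with state set $\Sigma$, label set $A$, transition relation $\to\,\subseteq \Sigma\times A\times\Sigma$ (written $s \xrightarrow{a} s'$) and initial state $s_0$. Block-labelled formulas in disjunctive form are generated by $\varphi ::= \mathbf{ff} \mid \varphi_1 \lor \varphi_2 \mid \langle a\rangle\varphi_0 \mid \mu X^k.\varphi_0 \mid \neg\varphi_0 \mid X^k$, where $a$ ranges over action labels, $X$ over propositional variables and $k\in\mathbb{N}$ is a block number attached to every variable occurrence. $\mathrm{fv}(\varphi)$ and $\mathrm{bv}(\varphi)$ denote the free and bound variables; $\varphi$ is closed if $\mathrm{fv}(\varphi)=\emptyset$. All bound variables are assumed to have distinct names, and for $X^k\in\mathrm{bv}(\varphi)$, $\varphi[X^k]$ denotes the unique sub-formula of $\varphi$ of the form $\mu X^k.\varphi_0$. Encoding: $\mathrm{enc}(\varphi)$ is the LTS whose states are the sub-formulas of $\varphi$, with initial state $\varphi$,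 where $\mathbf{ff}$ has no outgoing transitions and the transitions are exactly: $X^k \xrightarrow{\lor} \varphi[X^k]$; $\neg\varphi_0 \xrightarrow{\neg} \varphi_0$; $\langle a\rangle\varphi_0 \xrightarrow{\langle a\rangle}\varphi_0$; $\varphi_1\lor\varphi_2 \xrightarrow{\lor}\varphi_1$ and $\varphi_1\lor\varphi_2\xrightarrow{\lor}\varphi_2$; $\mu X^k.\varphi_0 \xrightarrow{\mu^k}\varphi_0$. (Labels are the symbols $\lor$, $\neg$, $\langle a\rangle$, $\mu^k$.) Decoding: for an LTS $P$ with labels of the forms $\lor,\neg,\langle a\rangle,\mu^k$, a state $s$ and a set $E$ of states, $\mathrm{dec}_s(P,s,E) = \bigvee_{s\xrightarrow{\sigma}s' \in P}\mathrm{dec}_t(P, s\xrightarrow{\sigma}s', E)$ (a disjunction built with binary $\lor$ in some enumeration order of the outgoing transitions; the empty disjunction is $\mathbf{ff}$), where $\mathrm{dec}_t(P,s\xrightarrow{\lor}s',E)=\mathrm{dec}_s(P,s',E)$, $\mathrm{dec}_t(P,s\xrightarrow{\neg}s',E)=\neg\mathrm{dec}_s(P,s',E)$, $\mathrm{dec}_t(P,s\xrightarrow{\langle a\rangle}s',E)=\langle a\rangle\mathrm{dec}_s(P,s',E)$, and $\mathrm{dec}_t(P,s\xrightarrow{\mu^k}s',E)$ equals $[s]^k$ if $s\in E$ and $\mu [s]^k.\mathrm{dec}_s(P,s',E\cup\{s\})$ otherwise. Here $[s]^k$ denotes a propositional variable with block number $k$ uniquely determined by the pair $(s,k)$. Equality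 modulo renaming, commutativity and idempotence: for a bijection $f$ on propositional variables, $=_f$ is the smallest relation on formulas such that whenever $\varphi_i =_f \varphi_i'$ ($i\in\{0,1,2\}$): $\mathbf{ff}=_f\mathbf{ff}$, $\neg\varphi_0=_f\neg\varphi_0'$, $\langle a\rangle\varphi_0=_f\langle a\rangle\varphi_0'$, $\varphi_1\lor\varphi_2=_f\varphi_1'\lor\varphi_2'$, $X=_f f(X)$ and $\mu X.\varphi_0=_f\mu f(X).\varphi_0'$ for every variable $X$; $\varphi_1\lor\varphi_2 =_f \varphi_2'\lor\varphi_1'$; $\varphi_0\lor\varphi_0=_f\varphi_0'$ and $\varphi_0=_f\varphi_0'\lor\varphi_0'$. *)

From Stdlib Require Import List.
Import ListNotations.
Set Implicit Arguments.

(* Block-labelled formulas in disjunctive form over action labels A and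
   variable names V; a propositional variable X^k is the pair (X, k). *)
Inductive form (A V : Type) : Type :=
| FF : form A V
| Or : form A V -> form A V -> form A V
| Dia : A -> form A V -> form A V
| Mu : V -> nat -> form A V -> form A V
| Neg : form A V -> form A V
| Var : V -> nat -> form A V.
Arguments FF {A V}. Arguments Or {A V}. Arguments Dia {A V}. Arguments Mu {A V}. Arguments Neg {A V}. Arguments Var {A V}.

Section Formulas.
Variables A V : Type.
Notation form := (form A V).

Inductive sub : form -> form -> Prop :=
| sub_refl p : sub p p
| sub_or_l p q r : sub r p -> sub r (Or p q)
| sub_or_r p q r : sub r q -> sub r (Or p q)
| sub_dia a p r : sub r p -> sub r (Dia a p)
| sub_mu X k p r : sub r p -> sub r (Mu X k p)
| sub_neg p r : sub r p -> sub r (Neg p).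

Fixpoint free (x : V * nat) (p : form) : Prop :=
  match p with
  | FF => False
  | Or p q => free x p \/ free x q
  | Dia _ p => free x p
  | Mu X k p => x <> (X, k) /\ free x p
  | Neg p => free x p
  | Var X k => x = (X, k)
  end.

Fixpoint bvl (p : form) : list (V * nat) :=
  match p with
  | FF => []
  | Or p q => bvl p ++ bvl q
  | Dia _ p => bvl p
  | Mu X k p => (X, k) :: bvl p
  | Neg p => bvl p
  | Var _ _ => []
  end.

Definition closed (p : form) : Prop := forall x, ~ free x p.

Definition distinct_bv (p : form) : Prop := NoDup (bvl p).

Inductive label : Type :=
| LOr : label
| LNeg : label
| LDia : A -> label
| LMu : nat -> label.

(* Transitions of enc(phi); the states are the sub-formulas of phi. *)
Inductive enc_trans (phi : form) : form -> label -> form -> Prop :=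
| et_var X k p : sub (Var X k) phi -> sub (Mu X k p) phi ->
    enc_trans phi (Var X k) LOr (Mu X k p)
| et_neg p : sub (Neg p) phi -> enc_trans phi (Neg p) LNeg p
| et_dia a p : sub (Dia a p) phi -> enc_trans phi (Dia a p) (LDia a) p
| et_or_l p q : sub (Or p q) phi -> enc_trans phi (Or p q) LOr p
| et_or_r p q : sub (Or p q) phi -> enc_trans phi (Or p q) LOr q
| et_mu X k p : sub (Mu X k p) phi -> enc_trans phi (Mu X k p) (LMu k) p.

Inductive eqf (f : V * nat -> V * nat) : form -> form -> Prop :=
| eqf_ff : eqf f FF FF
| eqf_neg p p' : eqf f p p' -> eqf f (Neg p) (Neg p')
| eqf_dia a p p' : eqf f p p' -> eqf f (Dia a p) (Dia a p')
| eqf_or p1 p2 p1' p2' : eqf f p1 p1' -> eqf f p2 p2' ->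
    eqf f (Or p1 p2) (Or p1' p2')
| eqf_var X k : eqf f (Var X k) (Var (fst (f (X, k))) (snd (f (X, k))))
| eqf_mu X k p p' : eqf f p p' ->
    eqf f (Mu X k p) (Mu (fst (f (X, k))) (snd (f (X, k))) p')
| eqf_comm p1 p2 p1' p2' : eqf f p1 p1' -> eqf f p2 p2' ->
    eqf f (Or p1 p2) (Or p2' p1')
| eqf_idem_l p p' : eqf f p p' -> eqf f (Or p p) p'
| eqf_idem_r p p' : eqf f p p' -> eqf f p (Or p' p').

Fixpoint bigor (l : list form) : form :=
  match l with
  | [] => FF
  | [x] => x
  | x :: l => Or x (bigor l)
  end.

Definition bijective (f : V * nat -> V * nat) : Prop :=
  exists g, (forall x, g (f x) = x) /\ (forall y, f (g y) = y).

End Formulas.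
Arguments LOr {A}. Arguments LNeg {A}. Arguments LDia {A}. Arguments LMu {A}.

Record lts (S L : Type) : Type := mkLTS {
  lstates : S -> Prop;
  ltrans : S -> L -> S -> Prop;
  linit : S }.

Definition enc (A V : Type) (phi : form A V) : lts (form A V) (label A) :=
  mkLTS (fun s => sub s phi) (enc_trans phi) phi.

(* Decoding, as a relation: decS code P s E psi means that psi is the result
   of dec_s(P, s, E) for some enumeration order of the outgoing transitions.
   [s]^k is the variable (code s k, k). *)
Section Decode.
Variables (A V S : Type) (code : S -> nat -> V) (P : lts S (label A)).

Inductive decS : S -> (S -> Prop) -> form A V -> Prop :=
| dec_s s E (l : list (label A * S)) (ps : list (form A V)) :
    NoDup l ->
    (forall sg s', In (sg, s') l <-> ltrans P s sg s') ->
    decL s E l ps ->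
    decS s E (bigor ps)
with decL : S -> (S -> Prop) -> list (label A * S) -> list (form A V) -> Prop :=
| decL_nil s E : decL s E [] []
| decL_cons s E t l p ps : decT s t E p -> decL s E l ps -> decL s E (t :: l) (p :: ps)
with decT : S -> (label A * S) -> (S -> Prop) -> form A V -> Prop :=
| decT_or s s' E p : decS s' E p -> decT s (LOr, s') E p
| decT_neg s s' E p : decS s' E p -> decT s (LNeg, s') E (Neg p)
| decT_dia s s' E a p : decS s' E p -> decT s (LDia a, s') E (Dia a p)
| decT_mu_in s s' E k : E s -> decT s (LMu k, s') E (Var (code s k) k)
| decT_mu_out s s' E k p : ~ E s -> decS s' (fun x => E x \/ x = s) p ->
    decT s (LMu k, s') E (Mu (code s k) k p).
End Decode.

(** The only non-structural case is disjunction, where the enumeration order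
   of the two transitions forces commutativity of [=_f], and the case
   [psi1 = psi2] (a single transition) forces idempotence. *)

From Stdlib Require Import List Permutation Classical.
Import ListNotations.
Set Implicit Arguments.

Section Subformulas.
Variables A V : Type.
Implicit Types (p q r : form A V).

Lemma sub_trans p q r : sub p q -> sub q r -> sub p r.
Proof. intros Hpq Hqr; induction Hqr; eauto using sub. Qed.

Lemma sub_mu_in_bvl X k p r : sub (Mu X k p) r -> In (X, k) (bvl r).
Proof.
  intros H; remember (Mu X k p) as m; induction H; subst; simpl;
    auto using in_or_app.
Qed.

Lemma sub_nodup_bvl p r : sub p r -> NoDup (bvl r) -> NoDup (bvl p).
Proof.
  intros H; induction H; simpl; intros Hnd; auto.
  - apply IHsub; eapply NoDup_app_remove_r; eauto.
  - apply IHsub; eapply NoDup_app_remove_l; eauto.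
  - apply IHsub; inversion Hnd; auto.
Qed.

Lemma NoDup_app_disjoint {T} (l1 l2 : list T) a :
  NoDup (l1 ++ l2) -> In a l1 -> In a l2 -> False.
Proof.
  induction l1 as [|b l1 IH]; simpl; intros Hnd H1 H2; [auto|].
  inversion Hnd; subst.
  destruct H1 as [<-|H1]; eauto using in_or_app.
Qed.

(** If binders are distinct, each variable [X^k] has at most one binder
    [mu X^k. p] in [r]; this makes [r[X^k]] well defined. *)
Lemma binder_unique r X k p q :
  NoDup (bvl r) -> sub (Mu X k p) r -> sub (Mu X k q) r -> p = q.
Proof.
  induction r as [|r1 IH1 r2 IH2|a r IH|Y j r IH|r IH|Y j]; simpl;
    intros Hnd Hp Hq; inversion Hp; subst; inversion Hq; subst; eauto.
  - eapply IH1; eauto using NoDup_app_remove_r.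
  - exfalso; eauto using NoDup_app_disjoint, sub_mu_in_bvl.
  - exfalso; eauto using NoDup_app_disjoint, sub_mu_in_bvl.
  - eapply IH2; eauto using NoDup_app_remove_l.
  - exfalso; inversion Hnd; eauto using sub_mu_in_bvl.
  - exfalso; inversion Hnd; eauto using sub_mu_in_bvl.
  - inversion Hnd; eauto.
Qed.

Lemma free_sub X k p r :
  sub p r -> free (X, k) p -> free (X, k) r \/ exists q, sub (Mu X k q) r.
Proof.
  intros H;
    induction H as [|? ? ? ? IH|? ? ? ? IH|? ? ? ? IH|Y j ? ? ? IH|? ? ? IH];
    intros Hf; simpl; auto;
    (destruct (IH Hf) as [Hfr|[b Hb]]; [|right; exists b; eauto using sub]); auto.
  destruct (classic ((X, k) = (Y, j))) as [e|ne]; auto.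
  injection e as -> ->; right; eexists; apply sub_refl.
Qed.

End Subformulas.

Section Encoding.
Variables (A V : Type) (phi : form A V).
Notation form := (form A V).

Definition enc_out (s : form) (ts : list (label A * form)) : Prop :=
  NoDup ts /\ forall sg s', enc_trans phi s sg s' <-> In (sg, s') ts.

Lemma enc_out_ff : enc_out FF [].
Proof. split; [constructor|intros sg s'; split; [inversion 1|intros []]]. Qed.

(* Proves [enc_out s [t]] when [t] is the only transition of shape [s]. *)
Ltac single_out :=
  split; [apply NoDup_cons; [intros []|apply NoDup_nil]|];
  intros sg s'; simpl; split;
  [ inversion 1; subst; auto
  | let Ht := fresh in intros [Ht|[]]; inversion Ht; subst; constructor; auto ].

Lemma enc_out_neg p : sub (Neg p) phi -> enc_out (Neg p) [(LNeg, p)].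
Proof. intros; single_out. Qed.

Lemma enc_out_dia a p : sub (Dia a p) phi -> enc_out (Dia a p) [(LDia a, p)].
Proof. intros; single_out. Qed.

Lemma enc_out_mu X k p : sub (Mu X k p) phi -> enc_out (Mu X k p) [(LMu k, p)].
Proof. intros; single_out. Qed.

Lemma enc_out_var X k p :
  NoDup (bvl phi) -> sub (Var X k) phi -> sub (Mu X k p) phi ->
  enc_out (Var X k) [(LOr, Mu X k p)].
Proof.
  intros Hnd Hv Hm; single_out.
  left; do 2 f_equal; eapply binder_unique; eauto.
Qed.

Lemma enc_out_or_same p : sub (Or p p) phi -> enc_out (Or p p) [(LOr, p)].
Proof. intros; single_out. Qed.

Lemma enc_out_or p q : p <> q -> sub (Or p q) phi ->
  enc_out (Or p q) [(LOr, p); (LOr, q)].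
Proof.
  intros Hne Hs; split.
  - repeat constructor; simpl; intuition congruence.
  - intros sg s'; simpl; split.
    + inversion 1; subst; auto.
    + intros [H|[H|[]]]; inversion H; subst; constructor; auto.
Qed.

End Encoding.

Section Decoding.
Variables (A V : Type) (code : form A V -> nat -> V) (phi : form A V).
Notation form := (form A V).
Notation decS := (decS code (enc phi)).
Notation decL := (decL code (enc phi)).
Notation decT := (decT code (enc phi)).

Lemma decS_intro s E ts ps :
  enc_out phi s ts -> decL s E ts ps -> decS s E (bigor ps).
Proof.
  intros [Hnd Hts] HL; apply dec_s with (l := ts); auto.
  intros sg s'; symmetry; apply Hts.
Qed.

Lemma decS_inv s E ts chi :
  enc_out phi s ts -> decS s E chi ->
  exists l ps, Permutation ts l /\ decL s E l ps /\ chi = bigor ps.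
Proof.
  intros [Hnd Hts] Hd; inversion Hd as [? ? l ps Hndl Hl HL]; subst.
  exists l, ps; repeat split; auto.
  apply NoDup_Permutation; auto.
  intros [sg s']; rewrite <- Hts; simpl; rewrite Hl; reflexivity.
Qed.

Lemma decL_one s E t ps :
  decL s E [t] ps -> exists p, ps = [p] /\ decT s t E p.
Proof.
  intros H; inversion H as [|? ? ? ? p ? Ht HL]; subst.
  inversion HL; subst; eauto.
Qed.

Lemma decL_two s E t1 t2 ps :
  decL s E [t1; t2] ps ->
  exists p1 p2, ps = [p1; p2] /\ decT s t1 E p1 /\ decT s t2 E p2.
Proof.
  intros H; inversion H as [|? ? ? ? p1 ? Ht1 HL]; subst.
  apply decL_one in HL as (p2 & -> & Ht2); eauto.
Qed.

Lemma decS_single s t E chi :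
  enc_out phi s [t] -> decS s E chi <-> decT s t E chi.
Proof.
  intros Hout; split; intro H.
  - destruct (decS_inv Hout H) as (l & ps & Hperm & HL & ->).
    apply Permutation_length_1_inv in Hperm; subst.
    apply decL_one in HL as (p & -> & Ht); exact Ht.
  - change chi with (bigor [chi]); apply (decS_intro Hout).
    repeat constructor; exact H.
Qed.

End Decoding.

Arguments decS_single {A V code phi s t E chi}.

Section Correctness.
Variables (A V : Type) (code : form A V -> nat -> V) (phi : form A V)
  (f : V * nat -> V * nat).
Hypothesis distinct : NoDup (bvl phi).
Hypothesis f_code :
  forall X k p, sub (Mu X k p) phi -> f (X, k) = (code (Mu X k p) k, k).
Notation form := (form A V).
Notation decS := (decS code (enc phi)).

Definition dec_correct (psi : form) (E : form -> Prop) : Prop :=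
  (exists chi, decS psi E chi) /\ (forall chi, decS psi E chi -> eqf f psi chi).

Definition admissible (psi : form) (E : form -> Prop) : Prop :=
  (forall Y k p, free (Y, k) psi -> sub (Mu Y k p) phi -> E (Mu Y k p)) /\
  (forall Y k p, In (Y, k) (bvl psi) -> sub (Mu Y k p) phi -> ~ E (Mu Y k p)).

Lemma admissible_or p q E :
  admissible (Or p q) E -> admissible p E /\ admissible q E.
Proof.
  intros [Hfree Hbound]; simpl in *.
  repeat split; intros; [apply Hfree|apply Hbound|apply Hfree|apply Hbound];
    auto using in_or_app.
Qed.

(** Entering [mu X^k. p] adds its binder to [E]; distinctness of binders
    keeps [p] admissible for the enlarged set. *)
Lemma admissible_mu X k p E :
  sub (Mu X k p) phi -> admissible (Mu X k p) E ->
  admissible p (fun s => E s \/ s = Mu X k p).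
Proof.
  intros Hs [Hfree Hbound]; simpl in *.
  assert (HXk : ~ In (X, k) (bvl p)).
  { pose proof (sub_nodup_bvl Hs distinct) as Hnd; inversion Hnd; auto. }
  split.
  - intros Y j q Hf Hq.
    destruct (classic ((Y, j) = (X, k))) as [e|ne].
    + injection e as -> ->; right; f_equal; eapply binder_unique; eauto.
    + left; auto.
  - intros Y j q Hin Hq [HE|Heq]; [eapply Hbound; eauto|].
    injection Heq as -> -> ->; contradiction.
Qed.

Lemma dec_correct_ff E : dec_correct FF E.
Proof.
  split.
  - exists (bigor []); apply (decS_intro (enc_out_ff phi)); constructor.
  - intros chi Hd.
    destruct (decS_inv (enc_out_ff phi) Hd) as (l & ps & Hperm & HL & ->).
    apply Permutation_nil in Hperm; subst; inversion HL; constructor.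
Qed.

Lemma dec_correct_neg p E :
  sub (Neg p) phi -> dec_correct p E -> dec_correct (Neg p) E.
Proof.
  intros Hs [[c Hc] Huniq]; pose proof (enc_out_neg Hs) as Hout; split.
  - exists (Neg c); apply (decS_single Hout); constructor; exact Hc.
  - intros chi Hd; apply (decS_single Hout) in Hd.
    inversion Hd; subst; constructor; auto.
Qed.

Lemma dec_correct_dia a p E :
  sub (Dia a p) phi -> dec_correct p E -> dec_correct (Dia a p) E.
Proof.
  intros Hs [[c Hc] Huniq]; pose proof (enc_out_dia Hs) as Hout; split.
  - exists (Dia a c); apply (decS_single Hout); constructor; exact Hc.
  - intros chi Hd; apply (decS_single Hout) in Hd.
    inversion Hd; subst; constructor; auto.
Qed.

(** A disjunction decodes to a disjunction of the decodings of its two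
    disjuncts, in either order, or to a single one if they coincide; this
    is where commutativity and idempotence of [=_f] are needed. *)
Lemma dec_correct_or p q E :
  sub (Or p q) phi -> dec_correct p E -> dec_correct q E ->
  dec_correct (Or p q) E.
Proof.
  intros Hs [[c1 Hc1] Huniq1] [[c2 Hc2] Huniq2].
  destruct (classic (p = q)) as [<-|Hne].
  - pose proof (enc_out_or_same Hs) as Hout; split.
    + exists c1; apply (decS_single Hout); constructor; exact Hc1.
    + intros chi Hd; apply (decS_single Hout) in Hd.
      inversion Hd; subst; apply eqf_idem_l; auto.
  - pose proof (enc_out_or Hne Hs) as Hout; split.
    + exists (bigor [c1; c2]); apply (decS_intro Hout).
      repeat constructor; assumption.
    + intros chi Hd.
      destruct (decS_inv Hout Hd) as (l & ps & Hperm & HL & ->).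
      apply Permutation_length_2_inv in Hperm as [-> | ->];
        apply decL_two in HL as (d1 & d2 & -> & Hd1 & Hd2);
        inversion Hd1; inversion Hd2; subst; simpl.
      * apply eqf_or; auto.
      * apply eqf_comm; auto.
Qed.

(** A fixpoint not yet in [E] decodes to a fixpoint named [code (Mu X k p) k],
    which is exactly [f (X, k)]. *)
Lemma dec_correct_mu X k p E :
  sub (Mu X k p) phi -> ~ E (Mu X k p) ->
  dec_correct p (fun s => E s \/ s = Mu X k p) -> dec_correct (Mu X k p) E.
Proof.
  intros Hs HnE [[c Hc] Huniq]; pose proof (enc_out_mu Hs) as Hout; split.
  - eexists; apply (decS_single Hout); apply decT_mu_out; eauto.
  - intros chi Hd; apply (decS_single Hout) in Hd.
    inversion Hd as [| | | |? ? ? ? d HnE' Hdec]; subst; [contradiction|].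
    pose proof (@eqf_mu A V f X k p d (Huniq d Hdec)) as Heq.
    rewrite (f_code Hs) in Heq; exact Heq.
Qed.

(** A variable steps to its binder, which is already in [E], and so decodes
    to the variable [code (Mu X k p) k], which is exactly [f (X, k)]. *)
Lemma dec_correct_var X k p E :
  sub (Var X k) phi -> sub (Mu X k p) phi -> E (Mu X k p) ->
  dec_correct (Var X k) E.
Proof.
  intros Hv Hm HE.
  pose proof (enc_out_var distinct Hv Hm) as Hout.
  pose proof (enc_out_mu Hm) as Hout_mu.
  split.
  - eexists; apply (decS_single Hout); constructor.
    apply (decS_single Hout_mu); apply decT_mu_in; exact HE.
  - intros chi Hd; apply (decS_single Hout) in Hd.
    inversion Hd as [? ? ? d Hdec| | | |]; subst.
    apply (decS_single Hout_mu) in Hdec.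
    inversion Hdec; subst; [|contradiction].
    pose proof (@eqf_var A V f X k) as Heq.
    rewrite (f_code Hm) in Heq; exact Heq.
Qed.

Lemma dec_correct_sub :
  closed phi ->
  forall psi E, sub psi phi -> admissible psi E -> dec_correct psi E.
Proof.
  intros Hclosed psi;
    induction psi as [|p IHp q IHq|a p IHp|X k p IHp|p IHp|X k]; intros E Hs Hadm.
  - apply dec_correct_ff.
  - destruct (admissible_or Hadm) as [Hp Hq].
    apply dec_correct_or; [exact Hs|apply IHp|apply IHq];
      eauto using sub_trans, sub.
  - apply dec_correct_dia; [exact Hs|apply IHp]; eauto using sub_trans, sub.
  - apply dec_correct_mu; [exact Hs| |apply IHp].
    + apply (proj2 Hadm X k p); simpl; auto.
    + eauto using sub_trans, sub.
    + apply admissible_mu; assumption.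
  - apply dec_correct_neg; [exact Hs|apply IHp]; eauto using sub_trans, sub.
  - destruct (free_sub X k Hs) as [Hfree|[p Hp]]; [simpl; auto| |].
    + exfalso; exact (Hclosed _ Hfree).
    + apply (dec_correct_var E Hs Hp); apply (proj1 Hadm); simpl; auto.
Qed.

End Correctness.

Theorem lemma1 (A V : Type) (code : form A V -> nat -> V)
  (phi : form A V) (f : V * nat -> V * nat) :
  closed phi ->
  distinct_bv phi ->
  bijective f ->
  (forall X k p, sub (Mu X k p) phi -> f (X, k) = (code (Mu X k p) k, k)) ->
  forall (psi : form A V) (E : form A V -> Prop),
    sub psi phi ->
    (forall s, E s -> sub s phi) ->
    (forall Y k p, free (Y, k) psi -> sub (Mu Y k p) phi -> E (Mu Y k p)) ->
    (forall Y k p, In (Y, k) (bvl psi) -> sub (Mu Y k p) phi -> ~ E (Mu Y k p)) ->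
    (exists chi, decS code (enc phi) psi E chi) /\
    (forall chi, decS code (enc phi) psi E chi -> eqf f psi chi).
Proof.
  intros Hclosed Hdistinct _ Hf psi E Hs _ Hfree Hbound.
  apply (dec_correct_sub code f Hdistinct Hf Hclosed Hs).
  split; assumption.
Qed.
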